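(* Let $n\in\mathbb{N}$ and let $X_a,X_b,X_c\subset X$ be the subspaces defined below. Then every function in $X_a\oplus X_b$ is even with respect to $x=1/2$ if $n$ is even and odd with respect to $x=1/2$ if $n$ is odd; every function in $X_c$ is odd with respect to $x=1/2$ if $n$ is even and even with respect to $x=1/2$ if $n$ is odd.
   Context: Let $X=\{u\in H^2(0,1): u'(0)=u'(1)=0,\ \int_0^1u\,dx=0\}$. For $u\in X$ its extension $\tilde u:\mathbb{R}\to\mathbb{R}$ is the $2$-periodic function with $\tilde u(x)=u(x)$ for $0\le x\le 1$ and $\tilde u(x)=u(2-x)$ for $1<x<2$; it lies in $H^2_{per}(\mathbb{R})=\{v\in H^2_{loc}(\mathbb{R}): v(x+2)=v(x)\ \forall x,\ \int_0^2v\,dx=0\}$. On $W=H^2_{per}(\mathbb{R})$ define $(T_nv)(x)=-v(x+1/n)$ and $W_a=N(T_n-I)$, $W_b=N(T_n^{n-1}+\dots+T_n+I)$, $W_c=N(T_n^n+I)$. Define $X_\tau=\{u\in X:\tilde u\in W_\tau\}$ for $\tau\in\{a,b,c\}$; one has $X=X_a\oplus X_b\oplus X_c$. *)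

From mathcomp Require Import all_boot all_order all_algebra.
From mathcomp Require Import all_classical all_reals all_analysis.
Set Implicit Arguments. Unset Strict Implicit. Unset Printing Implicit Defensive.
Import Order.TTheory GRing.Theory Num.Theory.
Import numFieldNormedType.Exports.
Local Open Scope classical_set_scope.
Local Open Scope ring_scope.

Section Defs.
Variable R : realType.
Local Notation mu := (@lebesgue_measure R).

(* H^2(a,b) (a < b), via its standard description on an interval:
   u is C^1 on [a,b] with u' absolutely continuous and u'' in L^2(a,b), i.e.
   u(x) = u(a) + int_a^x du, du(x) = du(a) + int_a^x w, with w in L^2(a,b).
   Only the values of u on [a,b] matter. *)
Definition H2_on (a b : R) (u : R -> R) : Prop :=
  exists (du w : R -> R),
    mu.-integrable `[a, b] (fun x => ((w x) ^+ 2)%:E) /\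
    mu.-integrable `[a, b] (fun x => (w x)%:E) /\
    (forall x, a <= x <= b ->
       du x = du a + Rintegral mu `[a, x] w /\
       u x = u a + Rintegral mu `[a, x] du).

Definition Xsp (u : R -> R) : Prop :=
  H2_on 0 1 u /\
  (h^-1 * (u h - u 0) @[h --> 0^'+] --> 0) /\
  (h^-1 * (u (1 + h) - u 1) @[h --> 0^'-] --> 0) /\
  Rintegral mu `[0, 1] u = 0.

Definition Wsp (v : R -> R) : Prop :=
  (forall a b, a < b -> H2_on a b v) /\
  (forall x, v (x + 2) = v x) /\
  Rintegral mu `[0, 2] v = 0.

(* even 2-periodic extension *)
Definition ext (u : R -> R) (x : R) : R :=
  let y := x - 2 * (Num.floor (x / 2))%:~R in
  if y <= 1 then u y else u (2 - y).

Definition Tn (n : nat) (v : R -> R) : R -> R :=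
  fun x => - v (x + (n%:R)^-1).

Definition Wa (n : nat) (v : R -> R) : Prop :=
  Wsp v /\ forall x, Tn n v x - v x = 0.
Definition Wb (n : nat) (v : R -> R) : Prop :=
  Wsp v /\ forall x, \sum_(k < n) iter k (Tn n) v x = 0.
Definition Wc (n : nat) (v : R -> R) : Prop :=
  Wsp v /\ forall x, iter n (Tn n) v x + v x = 0.

Definition Xa (n : nat) (u : R -> R) : Prop := Xsp u /\ Wa n (ext u).
Definition Xb (n : nat) (u : R -> R) : Prop := Xsp u /\ Wb n (ext u).
Definition Xc (n : nat) (u : R -> R) : Prop := Xsp u /\ Wc n (ext u).

Definition even_half (u : R -> R) : Prop :=
  forall x, 0 <= x <= 1 -> u (1 - x) = u x.
Definition odd_half (u : R -> R) : Prop :=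
  forall x, 0 <= x <= 1 -> u (1 - x) = - u x.

End Defs.

(* The translation T_n satisfies T_n^n v = (-1)^n v(. + 1).  On W_a and W_b one has T_n^n v = v
   (for W_b: apply T_n to sum_{k<n} T_n^k v = 0 and telescope), and on W_c one has T_n^n v = -v;
   so the extension of u is (anti)periodic with period 1, with sign s = (-1)^n resp. -(-1)^n.
   For an even 2-periodic extension, shifting 1 - x by 1 lands on the reflected point 2 - x,
   whence u(1 - x) = s u(x). *)
From mathcomp Require Import all_boot all_order all_algebra.
From mathcomp Require Import all_classical all_reals all_analysis.
From mathcomp Require Import ring lra.
Set Implicit Arguments. Unset Strict Implicit. Unset Printing Implicit Defensive.
Import Order.TTheory GRing.Theory Num.Theory.
Local Open Scope ring_scope.

Section TranslationOperator.
Variable R : realType.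
Implicit Types (n : nat) (v : R -> R).

Lemma iter_TnE n v k x : iter k (Tn n) v x = (-1) ^+ k * v (x + k%:R / n%:R).
Proof.
elim: k x => [|k IHk] x /=; first by rewrite mul1r mul0r addr0.
rewrite /Tn IHk exprS mulN1r mulNr -addrA -[k.+1]addn1 natrD mulrDl mul1r.
by rewrite [_^-1 + _]addrC.
Qed.

Lemma iter_Tn_n n v x : (0 < n)%N -> iter n (Tn n) v x = (-1) ^+ n * v (x + 1).
Proof. by move=> n_gt0; rewrite iter_TnE divff // pnatr_eq0 -lt0n. Qed.

Lemma Wa_iter_Tn n v : Wa n v -> forall x, iter n (Tn n) v x = v x.
Proof.
move=> [_ fixv] x.
have Tv : Tn n v = v by apply: funext => y; apply/eqP; rewrite -subr_eq0 fixv.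
have iterv k : iter k (Tn n) v = v by elim: k => //= k ->.
by rewrite iterv.
Qed.

Lemma Wb_iter_Tn n v : Wb n v -> forall x, iter n (Tn n) v x = v x.
Proof.
move=> [_ sum0] x; apply: subr0_eq.
have sum1 : \sum_(k < n) iter k.+1 (Tn n) v x = - \sum_(k < n) iter k (Tn n) v (x + n%:R^-1).
  by rewrite -sumrN; apply: eq_bigr.
have /= <- := telescope_sumr (fun k => iter k (Tn n) v x) (leq0n n).
by rewrite sumrB !big_mkord sum1 !sum0 oppr0 addr0.
Qed.

Lemma Wc_iter_Tn n v : Wc n v -> forall x, iter n (Tn n) v x = - v x.
Proof. by move=> [_ anti] x; apply/eqP; rewrite -subr_eq0 opprK anti. Qed.

Lemma iter_Tn_shift n v (c : R) : (0 < n)%N ->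
  (forall x, iter n (Tn n) v x = c * v x) -> forall x, v (x + 1) = (-1) ^+ n * c * v x.
Proof.
move=> n_gt0 iterv x.
by rewrite -mulrA -iterv iter_Tn_n // mulrA -expr2 sqrr_sign mul1r.
Qed.

Lemma Wa_shift n v : (0 < n)%N -> Wa n v -> forall x, v (x + 1) = (-1) ^+ n * v x.
Proof.
move=> n_gt0 /Wa_iter_Tn iterv x; rewrite -[_ ^+ n]mulr1.
by apply: iter_Tn_shift => // y; rewrite mul1r iterv.
Qed.

Lemma Wb_shift n v : (0 < n)%N -> Wb n v -> forall x, v (x + 1) = (-1) ^+ n * v x.
Proof.
move=> n_gt0 /Wb_iter_Tn iterv x; rewrite -[_ ^+ n]mulr1.
by apply: iter_Tn_shift => // y; rewrite mul1r iterv.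
Qed.

Lemma Wc_shift n v : (0 < n)%N -> Wc n v -> forall x, v (x + 1) = - (-1) ^+ n * v x.
Proof.
move=> n_gt0 /Wc_iter_Tn iterv x; rewrite -mulrN1.
by apply: iter_Tn_shift => // y; rewrite mulN1r iterv.
Qed.

End TranslationOperator.

Section EvenExtension.
Variables (R : realType) (u : R -> R).

Lemma extE y : 0 <= y < 2 -> ext u y = if y <= 1 then u y else u (2 - y).
Proof.
move=> y02; rewrite /ext (@floor_def _ _ 0) ?mulr0 ?subr0 //.
by rewrite add0r mulr0z ler_pdivlMr ?ltr_pdivrMr // mul0r mul1r.
Qed.

Lemma ext_periodic x : ext u (x + 2) = ext u x.
Proof.
rewrite /ext; have -> : (x + 2) / 2 = x / 2 + 1 by rewrite mulrDl divff ?pnatr_eq0.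
rewrite floorDrz ?intr_int // floor1 rmorphD /=; set f := _%:~R.
by have -> : x + 2 - 2 * (f + 1%:~R) = x - 2 * f by ring.
Qed.

Lemma ext_id x : 0 <= x <= 1 -> ext u x = u x.
Proof. by case/andP=> x0 x1; rewrite extE ?x1 // x0 (le_lt_trans x1) ?ltr1n. Qed.

Lemma ext_reflect x : 0 <= x <= 1 -> ext u (2 - x) = u x.
Proof.
case/andP; rewrite le0r => /orP[/eqP->|x_gt0] x1.
  by rewrite subr0 -[2]add0r ext_periodic ext_id ?lexx ?ler01.
rewrite extE; last by apply/andP; split; lra.
by case: ifPn => h; congr u; lra.
Qed.

Lemma ext_shift_reflect (s : R) : s ^+ 2 = 1 ->
  (forall x, ext u (x + 1) = s * ext u x) -> forall x, 0 <= x <= 1 -> u (1 - x) = s * u x.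
Proof.
move=> s2 shift x x01; have x'01 : 0 <= 1 - x <= 1 by move: x01 => /andP[]; lra.
have := shift (1 - x); rewrite (_ : 1 - x + 1 = 2 - x); last by ring.
rewrite ext_reflect // ext_id // => ->.
by rewrite mulrA -expr2 s2 mul1r.
Qed.

End EvenExtension.

Lemma sign_half_sym (R : realType) (b : bool) (u : R -> R) :
  (forall x, 0 <= x <= 1 -> u (1 - x) = (-1) ^+ b * u x) ->
  if b then odd_half u else even_half u.
Proof. by case: b => sym x /sym ->; rewrite ?expr1 ?mulN1r ?mul1r. Qed.

Theorem lemma2p8 (R : realType) (n : nat) (hn : (0 < n)%N) :
  (forall ua ub : R -> R, Xa n ua -> Xb n ub ->
     let u := fun x => ua x + ub x in
     if odd n then odd_half u else even_half u) /\
  (forall u : R -> R, Xc n u ->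
     if odd n then even_half u else odd_half u).
Proof.
have sign2 : ((-1) ^+ n) ^+ 2 = 1 :> R by exact: sqrr_sign.
split=> [ua ub [_ /(Wa_shift hn)/(ext_shift_reflect sign2) syma]
                [_ /(Wb_shift hn)/(ext_shift_reflect sign2) symb] u
        | u [_ /(Wc_shift hn)/ext_shift_reflect symc]].
- apply: sign_half_sym => x x01.
  by rewrite /u syma // symb // -signr_odd mulrDr.
- rewrite -if_neg; apply: sign_half_sym => x x01.
  by rewrite symc ?sqrrN // signrN signr_odd.
Qed.
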